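(* $\mathcal{S}pl$ is not a $\Pi^{0}_{4}$ subset of $2^{2^{<\omega}}$ (identified with the Cantor space via characteristic functions).
   Context: For an infinite $A\subseteq\omega$, let $S(A)$ be the set of all $\sigma\in2^{<\omega}$ such that $\sigma$ is constant on $A\cap\mathrm{dom}(\sigma)$. The splitting ideal $\mathcal{S}pl$ is the ideal on $2^{<\omega}$ generated by the sets $S(A)$, $A\in[\omega]^{\omega}$. *)

From mathcomp Require Import all_boot.
Set Implicit Arguments. Unset Strict Implicit. Unset Printing Implicit Defensive.

Definition binseq := seq bool.

Definition Cantor := binseq -> bool.

Definition infinite_nat (A : nat -> bool) : Prop := forall n, exists m, n <= m /\ A m.

Definition S_of (A : nat -> bool) (sigma : binseq) : Prop :=
  forall i j, i < size sigma -> j < size sigma -> A i -> A j ->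
    nth false sigma i = nth false sigma j.

(* The splitting ideal: the ideal generated by the S(A), A infinite, i.e. the sets
   contained in a finite union of such S(A). *)
Definition Spl (X : Cantor) : Prop :=
  exists (n : nat) (A : nat -> nat -> bool),
    (forall k, k < n -> infinite_nat (A k)) /\
    forall sigma, X sigma -> exists k, k < n /\ S_of (A k) sigma.

Definition cantor_open (U : Cantor -> Prop) : Prop :=
  forall x, U x -> exists F : seq binseq,
    forall y, (forall s, s \in F -> y s = x s) -> U y.

(* Borel hierarchy: Sigma n U means U is Sigma^0_n (n >= 1); Sigma 0 is empty. *)
Fixpoint Sigma0 (n : nat) (U : Cantor -> Prop) : Prop :=
  match n with
  | 0 => False
  | 1 => cantor_open U
  | S ((S _) as k) =>
      exists f : nat -> Cantor -> Prop,
        (forall i, Sigma0 k (fun x => ~ f i x)) /\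
        (forall x, U x <-> exists i, f i x)
  end.

Definition Pi0 (n : nat) (U : Cantor -> Prop) : Prop := Sigma0 n (fun x => ~ U x).

From mathcomp Require Import all_boot zify.
From Stdlib Require Import ClassicalEpsilon FunctionalExtensionality.
Set Implicit Arguments. Unset Strict Implicit. Unset Printing Implicit Defensive.

(* Spl is Sigma^0_4-hard.  Given b : nat^4 -> bool, say that k refutes j for i
   if b i j k l fails for every l.  We build, continuously in b, a set Z_b of
   binary sequences such that Z_b is in Spl iff some i has every j refuted.  A
   sequence s is in Z_b if, for some list J = j_0, ..., j_(n-1), s has at most n
   ones, all beyond the code of J, and any two of them are at distance at most
   the least k that, as far as stage |s| can tell, refutes some j_i for i.
   If k(j) refutes j for i_0, for every j, then the sequences of Z_b with at most
   i_0 ones are split by the residue classes mod i_0 + 1, and the others, whose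
   ones are all close together, by the even and the odd terms of a sequence
   growing faster than k.  Otherwise pick, for each i, a j_i refuted by no k.
   Given infinite A_0, ..., A_(n-1), put ones at points t_k of A_k beyond the
   code of J, and make s so long that no k <= max t_k seems to refute any j_i:
   then s is in Z_b but vanishes at a point of each A_k beyond max t_k.
   Composing this reduction with a universal Sigma^0_4 set and diagonalizing
   shows that the complement of Spl is not Sigma^0_4. *)

Definition determined_by T (F : seq binseq) (f : Cantor -> T) :=
  forall x y, {in F, x =1 y} -> f x = f y.

Definition finitary T (f : Cantor -> T) := exists F, determined_by F f.

Lemma finitary_cst T (c : T) : finitary (fun _ => c).
Proof. by exists [::]. Qed.

Lemma finitary_coord s : finitary (fun x => x s).
Proof. by exists [:: s] => x y; apply; rewrite mem_head. Qed.

Lemma finitary_comp2 A B C (h : A -> B -> C) f g :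
  finitary f -> finitary g -> finitary (fun x => h (f x) (g x)).
Proof.
move=> [F detF] [G detG]; exists (F ++ G) => x y xy.
by rewrite (detF x y) ?(detG x y) // => s sF; apply: xy; rewrite mem_cat sF ?orbT.
Qed.

Lemma finitary_comp A B (h : A -> B) f : finitary f -> finitary (fun x => h (f x)).
Proof. by move=> [F detF]; exists F => x y /detF ->. Qed.

Lemma finitary_ext T (f g : Cantor -> T) : f =1 g -> finitary f -> finitary g.
Proof. by move=> fg [F detF]; exists F => x y /detF; rewrite !fg. Qed.

Lemma finitary_map A B (P : Cantor -> A -> B) s :
  (forall e, finitary (P^~ e)) -> finitary (fun x => map (P x) s).
Proof.
move=> finP; elim: s => [|e s IHs]; first exact: finitary_cst.
exact: (finitary_comp2 cons (finP e) IHs).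
Qed.

Lemma finitary_has A (P : Cantor -> A -> bool) s :
  (forall e, finitary (P^~ e)) -> finitary (fun x => has (P x) s).
Proof.
move=> /(finitary_map s) /(finitary_comp (has id)); apply: finitary_ext => x.
by rewrite has_map.
Qed.

Lemma finitary_all A (P : Cantor -> A -> bool) s :
  (forall e, finitary (P^~ e)) -> finitary (fun x => all (P x) s).
Proof.
move=> /(finitary_map s) /(finitary_comp (all id)); apply: finitary_ext => x.
by rewrite all_map.
Qed.

Lemma finitary_find A (P : Cantor -> A -> bool) s :
  (forall e, finitary (P^~ e)) -> finitary (fun x => find (P x) s).
Proof.
move=> /(finitary_map s) /(finitary_comp (find id)); apply: finitary_ext => x.
by rewrite find_map.
Qed.

Lemma Sigma0_ext n (V W : Cantor -> Prop) :
  (forall x, V x <-> W x) -> Sigma0 n V -> Sigma0 n W.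
Proof.
case: n => [//|[|n]] /= VW.
  move=> openV x /VW /openV [F FV]; exists F => y /FV; exact: (proj1 (VW y)).
by move=> [f [fcl Vf]]; exists f; split=> // x; rewrite -VW.
Qed.

Lemma Sigma0_preimage (R : Cantor -> Cantor) :
  (forall s, finitary (R^~ s)) ->
  forall n V, Sigma0 n V -> Sigma0 n (fun x => V (R x)).
Proof.
move=> /choice [FR detR]; elim=> [//|[|n] IHn] V /=.
  move=> openV x /openV [F FV].
  exists (flatten (map FR F)) => y xy; apply: FV => s sF.
  apply: (detR s y x) => t tFs; apply: xy.
  by apply/flattenP; exists (FR s); rewrite ?map_f.
move=> [f [fcl Vf]]; exists (fun i x => f i (R x)); split=> [i|x].
  exact: (IHn _ (fcl i)).
exact: Vf.
Qed.

Definition column_code (i : nat) (s : binseq) : binseq := nseq i true ++ false :: s.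

Definition column (a : Cantor) (i : nat) : Cantor := fun s => a (column_code i s).

Definition join_columns (af : nat -> Cantor) : Cantor := fun s =>
  let i := index false s in if i < size s then af i (drop i.+1 s) else false.

Lemma join_columnsK af i : column (join_columns af) i = af i.
Proof.
apply: functional_extensionality => s; rewrite /column /join_columns /column_code.
have -> : index false (nseq i true ++ false :: s) = i.
  by rewrite index_cat (_ : false \in nseq i true = false) ?size_nseq ?addn0 //; elim: i.
rewrite size_cat size_nseq /= addnS ltnS leq_addr.
by rewrite drop_cat size_nseq ltnNge leqnSn subSnn /= drop0.
Qed.

Definition basic_open (l : nat) (x : Cantor) : bool :=
  if @unpickle (seq (binseq * bool)) l is Some F then all (fun p => x p.1 == p.2) F
  else false.

(* univ n.+1 a is the Sigma^0_(n+1) set coded by a: for n = 0 the union of the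
   basic open sets l with a (nseq l true), and otherwise the union of the
   complements of the sets coded by the columns of a. *)
Fixpoint univ (n : nat) (a x : Cantor) : Prop :=
  match n with
  | 0 => False
  | 1 => exists l, a (nseq l true) /\ basic_open l x
  | (_.+1 as k).+1 => exists i, ~ univ k (column a i) x
  end.

Lemma univSS n a x : univ n.+2 a x <-> exists i, ~ univ n.+1 (column a i) x.
Proof. by []. Qed.

Definition asbool (P : Prop) : bool :=
  if excluded_middle_informative P then true else false.

Lemma asboolP (P : Prop) : asbool P <-> P.
Proof. by rewrite /asbool; case: excluded_middle_informative. Qed.

Lemma Sigma0_univ n V : Sigma0 n.+1 V -> exists a, forall x, V x <-> univ n.+1 a x.
Proof.
elim: n V => [|n IHn] V.
  move=> /= openV; exists (fun s => asbool (forall y, basic_open (size s) y -> V y)).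
  move=> x; split=> [/openV [F FV] | [l [/asboolP lV xl]]]; last first.
    by apply: lV; rewrite size_nseq.
  exists (pickle [seq (s, x s) | s <- F]); split; last first.
    by rewrite /basic_open pickleK; apply/allP => _ /mapP [s _ ->] /=.
  apply/asboolP => y; rewrite size_nseq /basic_open pickleK => /allP yF.
  by apply: FV => s sF; apply/eqP; apply: (yF (s, x s)); rewrite map_f.
move=> [f [fcl Vf]].
have /choice [af univ_af] : forall i, exists a, forall x, ~ f i x <-> univ n.+1 a x.
  by move=> i; exact: IHn (fcl i).
exists (join_columns af) => x; rewrite Vf univSS; split=> [[i nfi] | [i]].
  by exists i; rewrite join_columnsK -univ_af.
by rewrite join_columnsK -univ_af => /NNPP; exists i.
Qed.

Lemma not_Sigma0_antidiagonal n : ~ Sigma0 n.+1 (fun x => ~ univ n.+1 x x).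
Proof. by move=> /Sigma0_univ [a univ_a]; have := univ_a a; tauto. Qed.

Lemma not_Pi0_reduction n (P : Cantor -> Prop) (R : Cantor -> Cantor) :
  (forall s, finitary (R^~ s)) -> (forall x, P (R x) <-> univ n.+1 x x) ->
  ~ Pi0 n.+1 P.
Proof.
move=> finR PR /(Sigma0_preimage finR) notP; apply: (@not_Sigma0_antidiagonal n).
by apply: Sigma0_ext notP => x; rewrite PR.
Qed.

Definition univ4_matrix (a x : Cantor) (i j k l : nat) : bool :=
  column (column (column a i) j) k (nseq l true) && basic_open l x.

Lemma univ4E a x :
  univ 4 a x <-> exists i, forall j, exists k, forall l, ~~ univ4_matrix a x i j k l.
Proof.
split=> [[i noj] | [i allj]]; exists i.
  move=> j; apply: NNPP => nok; apply: noj; exists j => -[k nol]; apply: nok.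
  exists k => l; apply/negP => /andP [al xl]; apply: nol; by exists l.
move=> [j]; apply; have [k nol] := allj j; exists k => -[l [al xl]].
by move: (nol l); rewrite /univ4_matrix al xl.
Qed.

Lemma finitary_univ4_matrix i j k l : finitary (fun x => univ4_matrix x x i j k l).
Proof.
apply: finitary_comp2; first exact: finitary_coord.
rewrite /basic_open; case: unpickle => [F|]; last exact: finitary_cst.
by apply: finitary_all => p; apply: (finitary_comp (eq_op^~ p.2) (finitary_coord p.1)).
Qed.

Lemma not_exists_forall4 (P : nat -> nat -> nat -> nat -> bool) :
  ~ (exists i, forall j, exists k, forall l, ~~ P i j k l) ->
  forall i, exists j, forall k, exists l, P i j k l.
Proof.
move=> noi i; apply: NNPP => noj; apply: noi; exists i => j; apply: NNPP => nok.
apply: noj; exists j => k; apply: NNPP => nol; apply: nok; exists k => l.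
by apply/negP => Pl; apply: nol; exists l.
Qed.

Lemma leq_bigmax_iota (F : nat -> nat) n k : k < n -> F k <= \max_(i <- iota 0 n) F i.
Proof. by move=> kn; apply: leq_bigmax_seq; rewrite ?mem_iota. Qed.

Definition ones (s : binseq) : seq nat := [seq p <- iota 0 (size s) | nth false s p].

Lemma mem_ones s p : (p \in ones s) = (p < size s) && nth false s p.
Proof. by rewrite mem_filter mem_iota andbC. Qed.

Lemma uniq_ones s : uniq (ones s).
Proof. exact/filter_uniq/iota_uniq. Qed.

Definition close_ones (g : nat) (s : binseq) : bool :=
  all (fun p => all (fun q => q - p <= g) (ones s)) (ones s).

Lemma S_of_ones_free (A : nat -> bool) s :
  (forall p, p \in ones s -> ~~ A p) -> S_of A s.
Proof.
move=> freeA i j si sj Ai Aj.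
suff zero p : p < size s -> A p -> nth false s p = false by rewrite !zero.
move=> sp Ap; apply/negbTE/negP => sp1.
by move: (freeA p); rewrite mem_ones sp sp1 Ap => /(_ isT).
Qed.

Lemma infinite_residue m t : t < m.+1 -> infinite_nat (fun p => p %% m.+1 == t).
Proof.
by move=> tm n; exists (n * m.+1 + t); rewrite modnMDl modn_small //; split=> //; nia.
Qed.

Lemma S_of_residue m s :
  size (ones s) <= m -> exists2 t, t < m.+1 & S_of (fun p => p %% m.+1 == t) s.
Proof.
move=> few; have /allPn [t] : ~~ all (mem [seq p %% m.+1 | p <- ones s]) (iota 0 m.+1).
  apply: contraL few => /allP covered.
  have := uniq_leq_size (iota_uniq 0 m.+1) covered; rewrite size_iota size_map; lia.
rewrite mem_iota => tm tfree; exists t => //; apply: S_of_ones_free => p onep.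
by apply: contra tfree => /eqP <-; apply: map_f.
Qed.

Fixpoint fast_seq (h : nat -> nat) (t : nat) : nat :=
  if t is t'.+1 then fast_seq h t' + h (fast_seq h t') + 1 else 0.

Lemma fast_seq_ge h t : t <= fast_seq h t.
Proof. by elim: t => //= t IHt; lia. Qed.

Lemma fast_seq_gap h t t' : t < t' -> fast_seq h t + h (fast_seq h t) < fast_seq h t'.
Proof.
elim: t' => // t' IHt'; rewrite ltnS leq_eqVlt => /predU1P [-> | /IHt'] /=; lia.
Qed.

Definition fast_terms (h : nat -> nat) (e : bool) (m : nat) : bool :=
  has (fun t => (fast_seq h t == m) && (odd t == e)) (iota 0 m.+1).

Lemma fast_termsP h e m :
  reflect (exists2 t, fast_seq h t = m & odd t = e) (fast_terms h e m).
Proof.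
apply: (iffP hasP) => [[t _ /andP [/eqP <- /eqP]] | [t <- te]]; first by exists t.
by exists t; rewrite ?te ?eqxx // mem_iota ltnS fast_seq_ge.
Qed.

Lemma infinite_fast_terms h e : infinite_nat (fast_terms h e).
Proof.
move=> n; exists (fast_seq h (e + n.*2)); split.
  by apply: leq_trans (fast_seq_ge _ _); rewrite -addnn; lia.
by apply/fast_termsP; exists (e + n.*2); rewrite // oddD odd_double addbF; case: e.
Qed.

(* The terms of fast_seq h are too far apart for two of them to be ones of s. *)
Lemma S_of_fast_terms h s :
  (forall p q, p \in ones s -> q \in ones s -> q - p <= h p) ->
  S_of (fast_terms h false) s \/ S_of (fast_terms h true) s.
Proof.
move=> close.
have apart t t' : t < t' -> fast_seq h t \in ones s -> fast_seq h t' \notin ones s.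
  move=> tt' onet; apply/negP => onet'.
  by have := close _ _ onet onet'; have := fast_seq_gap h tt'; lia.
case: (boolP (has (fast_terms h false) (ones s))) => [|/hasPn noeven]; last first.
  by left; apply: S_of_ones_free.
move=> /hasP [p onep /fast_termsP [t tp te]]; rewrite -tp in onep.
right; apply: S_of_ones_free => q oneq; apply/fast_termsP => -[t' tq t'e].
rewrite -tq in oneq; case: (ltngtP t t') => [tt' | t't | tt'].
- by rewrite (negPf (apart _ _ tt' onep)) in oneq.
- by rewrite (negPf (apart _ _ t't oneq)) in onep.
- by rewrite tt' t'e in te.
Qed.

Definition indicator (T : seq nat) (L : nat) : binseq := mkseq (fun p => p \in T) L.

Lemma ones_indicator T L p : (p \in ones (indicator T L)) = (p < L) && (p \in T).
Proof.
rewrite mem_ones size_mkseq; case: (ltnP p L) => // pL.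
by rewrite nth_mkseq.
Qed.

Lemma S_of_indicatorN (A : nat -> bool) T L p q :
  p < L -> q < L -> p \in T -> q \notin T -> A p -> A q -> ~ S_of A (indicator T L).
Proof.
move=> pL qL pT qT Ap Aq /(_ p q); rewrite !size_mkseq !nth_mkseq // pT (negbTE qT).
by move/(_ pL qL Ap Aq).
Qed.

Section Reduction.

Variable b : nat -> nat -> nat -> nat -> bool.

(* The least k <= L that, as far as stage L can tell, refutes nth 0 J i for
   some i < size J, i.e. ~~ b i (nth 0 J i) k l for all l <= L; L.+1 if none. *)
Definition max_gap (J : seq nat) (L : nat) : nat :=
  find (fun k => has (fun i => all (fun l => ~~ b i (nth 0 J i) k l) (iota 0 L.+1))
                     (iota 0 (size J)))
       (iota 0 L.+1).

Definition inZ (J : seq nat) (s : binseq) : bool :=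
  [&& size (ones s) <= size J, all (leq (pickle J)) (ones s)
    & close_ones (max_gap J (size s)) s].

(* Codes of J need only be searched below size s, as the ones of s lie beyond
   the code of J; this keeps Z decidable and continuous in b. *)
Definition Z (s : binseq) : bool :=
  nilp (ones s) || has (fun c => oapp (inZ^~ s) false (unpickle c)) (iota 0 (size s)).

Lemma ZP s : Z s <-> exists J, inZ J s.
Proof.
split=> [/orP [/nilP none | /hasP [c _]] | [J sJ]].
- by exists [::]; rewrite /inZ /close_ones none.
- by case: unpickle => // J; exists J.
case E: (ones s) => [|p r]; first by rewrite /Z E.
have onep : p \in ones s by rewrite E mem_head.
have /and3P [_ /allP /(_ p onep) Jp _] := sJ; apply/orP; right.
apply/hasP; exists (pickle J); last by rewrite pickleK.
by move: onep; rewrite mem_ones mem_iota => /andP [ps _]; lia.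
Qed.

Lemma max_gap_le J L i k :
  i < size J -> (forall l, ~~ b i (nth 0 J i) k l) -> max_gap J L <= k.
Proof.
move=> iJ fails; case: (ltnP L k) => [Lk | kL].
  by apply: leq_trans (find_size _ _) _; rewrite size_iota.
rewrite leqNgt; apply/negP => /(before_find 0); rewrite nth_iota // add0n.
move/negbT/negP; apply; apply/hasP; exists i; first by rewrite mem_iota.
exact/allP.
Qed.

Lemma max_gap_gt J L M : M <= L ->
  (forall k, k <= M -> forall i, i < size J -> exists2 l, l <= L & b i (nth 0 J i) k l) ->
  M < max_gap J L.
Proof.
move=> ML seen; rewrite ltnNge; apply/negP => gapM.
have : has (fun k => has (fun i => all (fun l => ~~ b i (nth 0 J i) k l) (iota 0 L.+1))
                           (iota 0 (size J))) (iota 0 L.+1).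
  by rewrite has_find size_iota; apply: leq_ltn_trans gapM _.
move=> /(nth_find 0); rewrite -/(max_gap J L) nth_iota ?add0n; last by lia.
move=> /hasP [i]; rewrite mem_iota => iJ /allP unseen.
have [l lL bl] := seen _ gapM i iJ.
by move: (unseen l); rewrite mem_iota ltnS lL bl => /(_ isT).
Qed.

Lemma inZ_indicator J T L :
  size T <= size J -> (forall p, p \in T -> pickle J <= p <= max_gap J L) ->
  inZ J (indicator T L).
Proof.
move=> TJ boundT; have onesT p : p \in ones (indicator T L) -> p \in T.
  by rewrite ones_indicator => /andP [].
apply/and3P; split.
- exact: leq_trans (uniq_leq_size (uniq_ones _) onesT) TJ.
- by apply/allP => p /onesT /boundT /andP [].
rewrite size_mkseq; apply/allP => p _; apply/allP => q /onesT /boundT /andP [_ qgap].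
exact: leq_trans (leq_subr p q) qgap.
Qed.

Lemma Spl_Z i0 : (forall j, exists k, forall l, ~~ b i0 j k l) -> Spl Z.
Proof.
move=> /choice [kf kf_refutes].
pose w (J : seq nat) := if i0 < size J then kf (nth 0 J i0) else 0.
pose h p := \max_(c <- iota 0 p.+1) oapp w 0 (unpickle c).
have w_le_h (J : seq nat) p : pickle J <= p -> w J <= h p.
  move=> Jp; have := @leq_bigmax_iota (fun c => oapp w 0 (unpickle c)) _ _ (Jp : _ < p.+1).
  by rewrite pickleK.
pose A k := if k is t.+2 then fun p => p %% i0.+1 == t else fast_terms h (k == 1).
exists i0.+3, A; split=> [[|[|t]] ti0 | s /ZP [J /and3P [fewJ /allP farJ /allP closeJ]]].
- exact: infinite_fast_terms.
- exact: infinite_fast_terms.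
- exact: infinite_residue.
case: (leqP (size J) i0) => [Ji0 | i0J].
  by have [t ti0 St] := S_of_residue (leq_trans fewJ Ji0); exists t.+2.
have close p q : p \in ones s -> q \in ones s -> q - p <= h p.
  move=> onep oneq; apply: leq_trans (w_le_h J p (farJ p onep)).
  rewrite /w i0J; apply: leq_trans (max_gap_le (size s) i0J (kf_refutes _)).
  exact: (allP (closeJ p onep)).
by case: (S_of_fast_terms close) => St; [exists 0 | exists 1].
Qed.

Lemma Spl_Z_refuted : Spl Z -> exists i, forall j, exists k, forall l, ~~ b i j k l.
Proof.
move=> [n [A [Ainf Acov]]]; apply: NNPP => /not_exists_forall4 /choice [jf jf_ok].
have /choice [lf lf_ok] : forall i, exists f, forall k, b i (jf i) k (f k).
  by move=> i; apply: choice (jf_ok i).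
have /choice [pt pt_ok] : forall k, exists f, forall m, m <= f m /\ (k < n -> A k (f m)).
  move=> k; apply: (choice (fun m y => m <= y /\ (k < n -> A k y))) => m.
  case: (ltnP k n) => [kn | _]; last by exists m.
  by have [y [my Ay]] := Ainf k kn m; exists y.
pose J := map jf (iota 0 n).
have nth_J i : i < n -> nth 0 J i = jf i.
  by move=> i_n; rewrite (nth_map 0) ?size_iota // nth_iota.
pose t k := pt k (pickle J); pose M := \max_(k <- iota 0 n) t k.
pose u k := pt k M.+1; pose U := \max_(k <- iota 0 n) u k.
pose L := M + U + \max_(i <- iota 0 n) \max_(k <- iota 0 M.+1) lf i k + 1.
have tM k : k < n -> t k <= M := @leq_bigmax_iota t n k.
have uU k : k < n -> u k <= U := @leq_bigmax_iota u n k.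
have M_gap : M < max_gap J L.
  apply: max_gap_gt => [|k kM i]; first lia.
  rewrite size_map size_iota => i_n; exists (lf i k); rewrite ?nth_J //.
  have := @leq_bigmax_iota (fun i => \max_(k <- iota 0 M.+1) lf i k) n i i_n.
  by have := @leq_bigmax_iota (lf i) _ _ (kM : k < M.+1); rewrite /L; lia.
pose T := map t (iota 0 n).
have sZ : Z (indicator T L).
  apply/ZP; exists J; apply: inZ_indicator; first by rewrite !size_map.
  move=> p /mapP [k]; rewrite mem_iota => kn ->.
  have [tk _] := pt_ok k (pickle J).
  by rewrite tk (leq_trans (tM k kn) (ltnW M_gap)).
have [k [kn Sk]] := Acov _ sZ; have [tk At] := pt_ok k (pickle J).
have [Mu Au] := pt_ok k M.+1; have := tM k kn; have := uU k kn.
move=> ukU tkM; apply: (S_of_indicatorN (p := t k) (q := u k)) Sk; rewrite ?At ?Au //.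
- by rewrite /L; lia.
- by rewrite /L; lia.
- by rewrite map_f // mem_iota.
apply/mapP => -[k']; rewrite mem_iota => k'n ukt.
by have := tM k' k'n; rewrite -ukt /u; lia.
Qed.

Lemma Spl_ZE : Spl Z <-> exists i, forall j, exists k, forall l, ~~ b i j k l.
Proof. by split=> [|[i0]]; [exact: Spl_Z_refuted | exact: Spl_Z]. Qed.

End Reduction.

Lemma finitary_Z (B : Cantor -> nat -> nat -> nat -> nat -> bool) s :
  (forall i j k l, finitary (fun x => B x i j k l)) -> finitary (fun x => Z (B x) s).
Proof.
move=> finB; apply: (finitary_comp2 orb (finitary_cst _)); apply: finitary_has => c.
case: unpickle => [J|]; last exact: finitary_cst.
apply: (finitary_comp (fun g => [&& _, _ & close_ones g s])).
apply: finitary_find => k; apply: finitary_has => i; apply: finitary_all => l.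
exact: (finitary_comp negb (finB _ _ _ _)).
Qed.

Theorem mainTheorem10 : ~ Pi0 4 Spl.
Proof.
apply: (@not_Pi0_reduction 3 Spl (fun x => Z (univ4_matrix x x))).
  by move=> s; apply: finitary_Z => i j k l; apply: finitary_univ4_matrix.
by move=> x; rewrite Spl_ZE univ4E.
Qed.
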